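(* Let $S=\{1,2\}$ and let $\mathcal{F}$ be the family of finite disjoint unions of $S$-colored chains whose colors alternate along the chain. For $i\in S$, $n\ge1$, let $L(i,n)$ be the alternating chain with $n$ elements whose maximal element (root) is colored $i$. Then in $\mathfrak{n}_{\mathcal{F}}$ with bracket $[x,y]=x\rhd y-y\rhd x$: $[\delta_{L(i,2k)},\delta_{L(j,2l)}]=0$; $[\delta_{L(i,2k)},\delta_{L(j,2l+1)}]=-\delta_{L(j,2(k+l)+1)}$ if $i=j$ and $=\delta_{L(j,2(k+l)+1)}$ if $i\ne j$; $[\delta_{L(i,2k+1)},\delta_{L(j,2l+1)}]=\delta_{L(j,2(k+l+1))}-\delta_{L(i,2(k+l+1))}$. Moreover the linear map $\phi:\mathfrak{n}_{\mathcal{F}}\to L\mathfrak{gl}_2^+$ given by $\phi(\delta_{L(1,2k+1)})=e\otimes t^k$, $\phi(\delta_{L(2,2k+1)})=f\otimes t^{k+1}$ $(k\ge0)$, $\phi(\delta_{L(1,2k)})=-h_1\otimes t^k$, $\phi(\delta_{L(2,2k)})=-h_2\otimes t^k$ $(k\ge1)$ is an isomorphism of Lie algebras.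
   Context: $\mathfrak{n}_{\mathcal{F}}$ is the $\mathbb{Q}$-vector space with basis $\delta_P$, $P$ ranging over isomorphism classes of connected members of $\mathcal{F}$, with product $\delta_a\rhd\delta_b=\sum_{t} n(a,b,t)\delta_t$ (sum over connected $t\in\mathcal{F}$ up to isomorphism), where $n(a,b,t)$ is the number of covering relations $x\lessdot y$ in $t$ such that $\{z\in t: z\le x\}\cong a$ and its complement $\cong b$ as colored posets (i.e. the number of ways $t$ is obtained by grafting the maximal element (root) of $a$ directly below an element of $b$). In $\mathfrak{gl}_2$ over $\mathbb{Q}$: $e=E_{1,2}$, $f=E_{2,1}$, $h_1=E_{1,1}$, $h_2=E_{2,2}$. $L\mathfrak{gl}_2=\mathfrak{gl}_2\otimes\mathbb{Q}[t,t^{-1}]$ with $[X\otimes t^m,Y\otimes t^n]=[X,Y]\otimes t^{m+n}$, and $L\mathfrak{gl}_2^+=\mathbb{Q}e\oplus(\mathfrak{gl}_2\otimes t\mathbb{Q}[t])$. *)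

From HB Require Import structures.
From mathcomp Require Import all_boot all_order all_algebra.
From Stdlib Require Import ClassicalEpsilon.
Set Implicit Arguments. Unset Strict Implicit. Unset Printing Implicit Defensive.
Import Order.TTheory GRing.Theory Num.Theory.
Local Open Scope ring_scope.

(* An S-colored chain (S = {1,2}) is encoded by the sequence of colors of its
   elements listed from the minimal element (head) to the maximal element /
   root (last).  Two colored chains are isomorphic as colored posets iff their
   color sequences are equal, so a sequence is the canonical representative of
   its isomorphism class. *)

Definition chainF (s : seq nat) : bool :=
  [&& s != [::], all (fun c => (c == 1)%N || (c == 2)%N) s
    & sorted (fun x y : nat => x != y) s].

Definition Lch (i n : nat) : seq nat :=
  [seq (if odd (n.-1 - p) then (3 - i)%N else i) | p <- iota 0 n].

(* n(a,b,t): number of covering relations x <. y in t (x at position p,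
   y at position p+1) with downset {z <= x} = take p.+1 t isomorphic to a and
   its complement drop p.+1 t isomorphic to b. *)
Definition ncount (a b t : seq nat) : nat :=
  count (fun p => (take p.+1 t == a) && (drop p.+1 t == b)) (iota 0 (size t).-1).

(* An element of n_F = sum_P c_P delta_P is represented by its coefficient
   function  seq nat -> rat , vanishing off connected members of F and of
   finite support. *)
Definition isNF (f : seq nat -> rat) : Prop :=
  (forall s, ~~ chainF s -> f s = 0) /\
  (exists N : nat, forall s, (N < size s)%N -> f s = 0).

Definition deltaF (P : seq nat) : seq nat -> rat := fun s => (s == P)%:R.

(* bilinear product  delta_a |> delta_b = sum_t n(a,b,t) delta_t ; only
   prefixes a and suffixes b of t can have n(a,b,t) <> 0. *)
Definition prodF (f g : seq nat -> rat) : seq nat -> rat := fun t =>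
  if chainF t then
    \sum_(a <- [seq take q t | q <- iota 0 (size t).+1])
      \sum_(b <- [seq drop q t | q <- iota 0 (size t).+1])
         f a * g b * (ncount a b t)%:R
  else 0.

Definition brF (f g : seq nat -> rat) : seq nat -> rat :=
  fun t => prodF f g t - prodF g f t.

(* gl_2 (x) Q[t] is identified with 2x2 matrices over Q[t]; the loop bracket
   [X t^m, Y t^n] = [X,Y] t^(m+n) is the matrix commutator.  Index 0 <-> 1,
   index 1 <-> 2, so e = E_{0,1}, f = E_{1,0}, h_1 = E_{0,0}, h_2 = E_{1,1}.
   L gl_2^+ = Q e (+) gl_2 (x) tQ[t]: all constant terms vanish except
   possibly that of the (0,1) entry. *)
Definition isLglP (A : 'M[{poly rat}]_2) : Prop :=
  (A 0 0)`_0 = 0 /\ (A 1 0)`_0 = 0 /\ (A 1 1)`_0 = 0.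

Definition brL (A B : 'M[{poly rat}]_2) : 'M[{poly rat}]_2 := A * B - B * A.

Definition suppBound (f : seq nat -> rat) : nat :=
  epsilon (inhabits 0%N) (fun N : nat => forall s, (N < size s)%N -> f s = 0).

Definition phiCoef (f : seq nat -> rat) (a b k : nat) : rat :=
  match a, b with
  | 0, 1 => f (Lch 1 k.*2.+1)
  | 1, 0 => if k is k'.+1 then f (Lch 2 k'.*2.+1) else 0
  | 0, 0 => if k is 0 then 0 else - f (Lch 1 k.*2)
  | _, _ => if k is 0 then 0 else - f (Lch 2 k.*2)
  end.

Definition phi (f : seq nat -> rat) : 'M[{poly rat}]_2 :=
  \matrix_(a < 2, b < 2) \poly_(k < (suppBound f).+1) phiCoef f a b k.

From HB Require Import structures.
From mathcomp Require Import all_boot all_order all_algebra.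
From mathcomp Require Import zify.
From Stdlib Require Import ClassicalEpsilon.
Set Implicit Arguments. Unset Strict Implicit. Unset Printing Implicit Defensive.
Import Order.TTheory GRing.Theory Num.Theory.
Local Open Scope ring_scope.

(* Every connected member of F is an alternating chain, determined by its root
   color c and its size n, i.e. it is L(c, n).  Grafting only glues a chain
   below the bottom of another one, so d_L(i,a) |> d_L(j,b) is d_L(j,a+b) when the
   colors still alternate at the junction and 0 otherwise; the three bracket
   formulas follow by parity.
   For phi, evaluating f |> g on L(c, n) sums over the n - 1 ways of cutting
   the chain.  Sorting the cuts by parity turns this sum into a convolution of
   coefficients of phi f and phi g, which is exactly phi (f |> g) = - phi g * phi f
   in gl_2 (x) Q[t]; hence phi preserves the bracket.  Each basis chain L(c, n)
   is sent to a single monomial of a single entry, and these monomials are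
   exactly the ones allowed in L gl_2^+, so phi is bijective. *)

Lemma natr_count (T : Type) (R : pzSemiRingType) (a : pred T) (s : seq T) :
  (count a s)%:R = \sum_(x <- s) (a x)%:R :> R.
Proof. by elim: s => [|x s IH]; rewrite ?big_nil // big_cons natrD IH. Qed.

Lemma sumr_mul_eq_seq (T : eqType) (R : pzSemiRingType) (s : seq T) (F : T -> R) x :
  x \in s -> uniq s -> \sum_(y <- s) F y * (y == x)%:R = F x.
Proof.
move=> xs us; rewrite (bigD1_seq x) //= eqxx mulr1 big1 ?addr0 // => y /negbTE->.
by rewrite mulr0.
Qed.

Lemma sumr_mul_eq_ord (R : pzSemiRingType) N (F : 'I_N.+1 -> R) x :
  \sum_(r < N.+1) F r * (r == x :> nat)%:R = if (x <= N)%N then F (inord x) else 0.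
Proof.
case: leqP => hx.
  rewrite (bigD1 (inord x)) //= inordK // eqxx mulr1 big1 ?addr0 // => r hr.
  rewrite (_ : (r == x :> nat) = false) ?mulr0 //; apply/negbTE.
  by apply: contra hr => /eqP hrx; apply/eqP/val_inj; rewrite /= inordK // hrx.
apply: big1 => r _; rewrite (_ : (r == x :> nat) = false) ?mulr0 //.
by apply/negbTE; rewrite neq_ltn (leq_trans (ltn_ord r) hx).
Qed.

Lemma big_ord_double (R : nmodType) (F : nat -> R) K :
  \sum_(r < K.*2) F r = \sum_(m < K) F m.*2 + \sum_(m < K) F m.*2.+1.
Proof.
elim: K => [|K IH]; first by rewrite !big_ord0 addr0.
by rewrite doubleS !big_ord_recr /= IH addrACA -!addrA.
Qed.

Lemma eq_take_size (T : eqType) (s : seq T) p q : (p <= size s)%N -> (q <= size s)%N ->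
  (take p s == take q s) = (p == q).
Proof.
move=> hp hq; apply/eqP/eqP => [E|->] //.
by have := congr1 size E; rewrite !size_takel.
Qed.

Lemma eq_drop_size (T : eqType) (s : seq T) p q : (p <= size s)%N -> (q <= size s)%N ->
  (drop p s == drop q s) = (p == q).
Proof.
move=> hp hq; apply/eqP/eqP => [E|->] //.
by have := congr1 size E; rewrite !size_drop; lia.
Qed.

Lemma coef_mulmx (R : nzSemiRingType) m n p (A : 'M[{poly R}]_(m, n))
    (B : 'M[{poly R}]_(n, p)) i j k :
  ((A *m B) i j)`_k = \sum_(l < k.+1) \sum_(c < n) (A i c)`_l * (B c j)`_(k - l).
Proof.
by rewrite mxE coef_sum exchange_big; apply: eq_bigr => c _; rewrite coefM.
Qed.

Lemma ord2P (a : 'I_2) : a = 0 \/ a = 1.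
Proof. by case: a => [[|[|//]]] ?; [left | right]; apply: val_inj. Qed.

Definition is_color (c : nat) : bool := (c == 1)%N || (c == 2)%N.

Lemma is_color_sub c : is_color c -> is_color (3 - c).
Proof. by case/orP=> /eqP->. Qed.

Lemma subK_color c : is_color c -> (3 - (3 - c) = c)%N.
Proof. by case/orP=> /eqP->. Qed.

Lemma sub_color_eq i j : is_color i -> is_color j -> ((3 - j)%N == i) = (i != j).
Proof. by case/orP=> /eqP->; case/orP=> /eqP->. Qed.

(* The color, in an alternating chain, of the element r steps below one of color c. *)
Definition color_below (c r : nat) : nat := if odd r then (3 - c)%N else c.

Lemma color_below_double c k : color_below c k.*2 = c.
Proof. by rewrite /color_below odd_double. Qed.

Lemma color_below_doubleS c k : color_below c k.*2.+1 = (3 - c)%N.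
Proof. by rewrite /color_below /= odd_double. Qed.

Lemma size_Lch c n : size (Lch c n) = n.
Proof. by rewrite size_map size_iota. Qed.

Lemma Lch_cat c a b : is_color c ->
  Lch c (a + b) = Lch (color_below c b) a ++ Lch c b.
Proof.
move=> hc; rewrite /Lch iotaD map_cat add0n; congr (_ ++ _).
  apply/eq_in_map => p; rewrite mem_iota add0n => /andP[_ hp].
  have -> : ((a + b).-1 - p = b + (a.-1 - p))%N by lia.
  rewrite oddD /color_below.
  by case: (odd b); case: (odd _); rewrite //= subK_color.
rewrite -(addn0 a) iotaDl addn0 -map_comp; apply/eq_in_map => p.
rewrite mem_iota add0n => /andP[_ hp] /=.
by have -> : ((a + b).-1 - (a + p) = b.-1 - p)%N by lia.
Qed.

Lemma Lch_rcons c n : is_color c -> Lch c n.+1 = rcons (Lch (3 - c) n) c.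
Proof. by move=> hc; rewrite -addn1 Lch_cat // -cats1. Qed.

Lemma last_Lch c n x : last x (Lch c n.+1) = c.
Proof. by rewrite /Lch -addn1 iotaD map_cat last_cat /= add0n addn1 subnn. Qed.

Lemma eq_Lch c c' n m : (0 < n)%N ->
  (Lch c n == Lch c' m) = (n == m) && (c == c').
Proof.
move=> n0; apply/eqP/andP => [E|[/eqP<- /eqP<-]] //.
have nm : n = m by rewrite -(size_Lch c n) E size_Lch.
subst m; split => //; case: n n0 E => // n _ E.
by rewrite -(last_Lch c n 0) E last_Lch.
Qed.

Lemma chainF_Lch c n : is_color c -> (0 < n)%N -> chainF (Lch c n).
Proof.
elim: n c => // n IH c hc _.
case: n IH => [|n] IH; first by rewrite /chainF /=; case/orP: hc => /eqP->.
have /and3P[_ hcol hsort] := IH _ (is_color_sub hc) isT.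
rewrite /chainF Lch_rcons //; apply/and3P; split.
- by rewrite -size_eq0 size_rcons.
- by rewrite all_rcons hcol andbT.
case E: (Lch (3 - c) n.+1) hsort => [//|y s] /= hsort.
have hlast : last y s = (3 - c)%N by rewrite -(last_Lch (3 - c) n y) E.
rewrite /= rcons_path hsort hlast.
by case/orP: hc => /eqP->.
Qed.

Lemma chainF_LchP s :
  chainF s -> exists c n, [/\ is_color c, (0 < n)%N & s = Lch c n].
Proof.
elim/last_ind: s => [|s x IH] //.
rewrite /chainF all_rcons => /and3P[_ /andP[hx hcol] hsort].
exists x, (size s).+1; split => //.
case: s IH hcol hsort => [|y s] IH hcol hsort; first by case/orP: hx => /eqP->.
move: hsort; rewrite /= rcons_path => /andP[hsort hneq].
have [c [n [hc n0 E]]] := IH (introT and3P (And3 isT hcol hsort)).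
have -> : (size s).+1 = n by rewrite -(size_Lch c n) -E.
rewrite -rcons_cons E Lch_rcons //.
suff -> : c = (3 - x)%N by [].
have hlast : last y s = c by move: (last_Lch c n.-1 0); rewrite prednK // -E.
move: hneq hc hx; rewrite hlast /is_color => hneq /orP[] /eqP hc /orP[] /eqP hx;
  by rewrite hc hx in hneq *.
Qed.

(* Only the pairs (take q t, drop q t) split t at a covering relation, so the
   double sum over prefixes and suffixes collapses to its diagonal. *)
Lemma prodF_chain f g t : chainF t -> prodF f g t =
  \sum_(p <- iota 0 (size t).-1) f (take p.+1 t) * g (drop p.+1 t).
Proof.
move=> ct; rewrite /prodF ct big_map; under eq_bigr do rewrite big_map.
set I := iota 0 (size t).+1.
transitivity (\sum_(q <- I) \sum_(q' <- I) \sum_(p <- iota 0 (size t).-1)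
   f (take q t) * g (drop q' t) *
   ((take p.+1 t == take q t) && (drop p.+1 t == drop q' t))%:R).
  by apply: eq_bigr => q _; apply: eq_bigr => q' _; rewrite natr_count mulr_sumr.
under eq_bigr do rewrite exchange_big; rewrite exchange_big.
apply: eq_big_seq => p; rewrite mem_iota add0n => /andP[_ hp].
have hp1 : (p.+1 <= size t)%N by lia.
have hpI : p.+1 \in I by rewrite mem_iota add0n ltnS.
have uI : uniq I := iota_uniq _ _.
rewrite -[RHS](sumr_mul_eq_seq (fun q => f (take q t) * g (drop p.+1 t)) hpI uI).
apply: eq_big_seq => q; rewrite mem_iota add0n ltnS => hq.
rewrite -[in RHS](sumr_mul_eq_seq (fun q' => f (take q t) * g (drop q' t)) hpI uI).
rewrite mulr_suml.
apply: eq_big_seq => q'; rewrite mem_iota add0n ltnS => hq'.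
rewrite eq_take_size ?eq_drop_size // -mulnb natrM !mulrA.
by rewrite [_ * (p.+1 == q)%:R * _]mulrAC !(eq_sym p.+1).
Qed.

Lemma prodF_Lch f g c n R : f [::] = 0 -> g [::] = 0 -> is_color c -> (n < R)%N ->
  prodF f g (Lch c n) = \sum_(r < R) f (Lch (color_below c r) (n - r)) * g (Lch c r).
Proof.
move=> f0 g0 hc nR.
rewrite -(big_mkord xpredT (fun r => f (Lch (color_below c r) (n - r)) * g (Lch c r))).
rewrite (big_cat_nat (n := n.+1)) //= [X in _ + X]big1_seq ?addr0; last first.
  move=> r /andP[_]; rewrite mem_index_iota => /andP[hr _].
  have -> : (n - r = 0)%N by lia.
  by rewrite [Lch _ 0]/= f0 mul0r.
case: n nR => [|n] nR; first by rewrite big_nat1 f0 mul0r.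
rewrite prodF_chain ?chainF_Lch // size_Lch.
set G := fun q => f (take q (Lch c n.+1)) * g (drop q (Lch c n.+1)).
transitivity (\sum_(0 <= q < n.+2) G q).
  rewrite big_nat_recl // big_nat_recr // /G take0 f0 mul0r add0r.
  by rewrite drop_oversize ?size_Lch // g0 mulr0 Monoid.mulm1 /index_iota subn0.
rewrite big_nat_rev /=; apply: eq_big_nat => r; rewrite add0n subSS => /andP[_ hr].
rewrite /G; have -> : Lch c n.+1 = Lch (color_below c r) (n.+1 - r) ++ Lch c r.
  by rewrite -Lch_cat ?subnK.
by rewrite take_size_cat ?drop_size_cat // size_Lch.
Qed.

Lemma deltaF_Lch i a c n : (0 < a)%N ->
  deltaF (Lch i a) (Lch c n) = ((n == a) && (c == i))%:R.
Proof.
move=> a0; rewrite /deltaF.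
case: n => [|n]; last by rewrite eq_Lch.
by case: a a0 => // a _; rewrite eq_sym -size_eq0 size_Lch.
Qed.

(* Grafting L(i,a) below L(j,b) stays alternating iff i differs from the
   bottom color of L(j,b), that is, iff i is the color one step below it. *)
Lemma prodF_deltaF i j a b : is_color j -> (0 < a)%N -> (0 < b)%N ->
  prodF (deltaF (Lch i a)) (deltaF (Lch j b)) =1
  (fun s => if color_below j b == i then deltaF (Lch j (a + b)) s else 0).
Proof.
move=> hj a0 b0 s.
case cs: (chainF s); last first.
  rewrite /prodF cs; case: ifP => // _; rewrite /deltaF.
  have hL : chainF (Lch j (a + b)) by rewrite chainF_Lch // addn_gt0 a0.
  by case: eqP => // E; rewrite -E cs in hL.
have [c [n [hc n0 ->]]] := chainF_LchP cs.
have nil0 P : (0 < size P)%N -> deltaF P [::] = 0 by case: P.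
rewrite (prodF_Lch (R := n.+1)) ?nil0 ?size_Lch //.
under eq_bigr => r _ do rewrite !deltaF_Lch //.
rewrite deltaF_Lch ?addn_gt0 ?a0 //.
case: (eqVneq c j) => [->|cj]; last first.
  by rewrite andbF if_same big1 // => r _; rewrite andbF mulr0.
under eq_bigr => r _ do rewrite andbT.
rewrite sumr_mul_eq_ord; case: leqP => bn; last first.
  by case: ifP => // _; case: eqP => // ?; lia.
rewrite inordK ?ltnS //.
have -> : (n - b == a)%N = (n == a + b)%N by apply/eqP/eqP; lia.
by case: (color_below j b == i); rewrite ?andbT ?andbF.
Qed.

Lemma brF_Lch_even_even i j k l : is_color i -> is_color j -> (0 < k)%N -> (0 < l)%N ->
  brF (deltaF (Lch i k.*2)) (deltaF (Lch j l.*2)) =1 (fun _ => 0).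
Proof.
move=> hi hj k0 l0 s; rewrite /brF !prodF_deltaF ?double_gt0 // !color_below_double.
by case: (eqVneq i j) => [->|_]; rewrite ?subrr // addnC subrr.
Qed.

Lemma brF_Lch_even_odd i j k l : is_color i -> is_color j -> (0 < k)%N ->
  brF (deltaF (Lch i k.*2)) (deltaF (Lch j l.*2.+1)) =1
  (fun s => (if i == j then -1 else 1) * deltaF (Lch j (k + l).*2.+1) s).
Proof.
move=> hi hj k0 s; rewrite /brF !prodF_deltaF ?double_gt0 //.
rewrite color_below_double color_below_doubleS sub_color_eq //.
have -> : (k.*2 + l.*2.+1 = (k + l).*2.+1)%N by lia.
have -> : (l.*2.+1 + k.*2 = (k + l).*2.+1)%N by lia.
by case: (eqVneq i j) => [->|_]; rewrite ?sub0r ?mulN1r ?subr0 ?mul1r.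
Qed.

Lemma brF_Lch_odd_odd i j k l : is_color i -> is_color j ->
  brF (deltaF (Lch i k.*2.+1)) (deltaF (Lch j l.*2.+1)) =1
  (fun s => deltaF (Lch j (k + l).+1.*2) s - deltaF (Lch i (k + l).+1.*2) s).
Proof.
move=> hi hj s; rewrite /brF !prodF_deltaF // !color_below_doubleS !sub_color_eq //.
have -> : (k.*2.+1 + l.*2.+1 = (k + l).+1.*2)%N by lia.
have -> : (l.*2.+1 + k.*2.+1 = (k + l).+1.*2)%N by lia.
by case: (eqVneq i j) => [->|_]; rewrite ?subrr.
Qed.

Lemma suppBoundP f : isNF f -> forall s, (suppBound f < size s)%N -> f s = 0.
Proof. by case=> _ ex; apply: (epsilon_spec (inhabits 0%N) _ ex). Qed.

Lemma isNF_nil f : isNF f -> f [::] = 0.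
Proof. by case=> h _; apply: h. Qed.

Lemma coef_phi f : isNF f -> forall (a b : 'I_2) k, (phi f a b)`_k = phiCoef f a b k.
Proof.
move=> hf a b k; rewrite mxE coef_poly; case: ltnP => // hk.
have f0 s : (k <= size s)%N -> f s = 0 by move=> hs; apply: suppBoundP => //; lia.
by case: (ord2P a) => ->; case: (ord2P b) => ->; case: k hk f0 => [|k] hk f0 //=;
  rewrite f0 ?oppr0 // size_Lch; lia.
Qed.

Lemma phiCoef00 f m : f [::] = 0 -> phiCoef f 0 0 m = - f (Lch 1 m.*2).
Proof. by move=> f0; case: m => //=; rewrite f0 oppr0. Qed.

Lemma phiCoef01 f m : phiCoef f 0 1 m = f (Lch 1 m.*2.+1).
Proof. by []. Qed.

Lemma phiCoef10 f m : f [::] = 0 -> phiCoef f 1 0 m = f (Lch 2 m.*2.-1).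
Proof. by move=> f0; case: m => //=; rewrite f0. Qed.

Lemma phiCoef11 f m : f [::] = 0 -> phiCoef f 1 1 m = - f (Lch 2 m.*2).
Proof. by move=> f0; case: m => //=; rewrite f0 oppr0. Qed.

Lemma phi_isLglP f : isNF f -> isLglP (phi f).
Proof. by move=> hf; split; [|split]; rewrite coef_phi. Qed.

Lemma isNF_lin (c : rat) f g : isNF f -> isNF g -> isNF (fun s => c * f s + g s).
Proof.
move=> hf hg; split; first by move=> s hs; rewrite hf.1 ?hg.1 // mulr0 addr0.
exists (suppBound f + suppBound g)%N => s hs.
by rewrite !suppBoundP ?mulr0 ?addr0 //; lia.
Qed.

Lemma phi_lin (c : rat) f g : isNF f -> isNF g ->
  phi (fun s => c * f s + g s) = c%:P *: phi f + phi g.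
Proof.
move=> hf hg; apply/matrixP => a b.
have -> : (c%:P *: phi f + phi g) a b = c%:P * phi f a b + phi g a b by rewrite !mxE.
apply/polyP => k; rewrite coefD coefCM !coef_phi //; last exact: isNF_lin.
by case: (ord2P a) => ->; case: (ord2P b) => ->; case: k => [|k] /=;
  rewrite ?mulr0 ?addr0 ?opprD ?mulrN.
Qed.

Definition phi_inv (A : 'M[{poly rat}]_2) (s : seq nat) : rat :=
  if chainF s then
    let k := (size s)./2 in
    if odd (size s) then
      if last 0%N s == 1%N then (A 0 1)`_k else (A 1 0)`_k.+1
    else if last 0%N s == 1%N then - (A 0 0)`_k else - (A 1 1)`_k
  else 0.

Lemma phi_inv_Lch A c n : is_color c -> (0 < n)%N -> phi_inv A (Lch c n) =
  if odd n then if c == 1%N then (A 0 1)`_n./2 else (A 1 0)`_n./2.+1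
  else if c == 1%N then - (A 0 0)`_n./2 else - (A 1 1)`_n./2.
Proof.
by move=> hc n0; rewrite /phi_inv chainF_Lch // size_Lch -(prednK n0) last_Lch.
Qed.

Lemma isNF_phi_inv A : isNF (phi_inv A).
Proof.
split; first by move=> s /negbTE hs; rewrite /phi_inv hs.
pose N := (\sum_(a < 2) \sum_(b < 2) size (A a b))%N.
exists N.*2 => s hs; rewrite /phi_inv; case: ifP => // _.
have hN : (N <= (size s)./2)%N by rewrite geq_half_double ltnW.
have hA a b m : ((size s)./2 <= m)%N -> (size (A a b) <= m)%N.
  move=> hm; apply: leq_trans (leq_trans hN hm).
  by rewrite /N (bigD1 a) //= (bigD1 b) //= -addnA leq_addr.
by rewrite !nth_default ?oppr0 ?if_same // hA.
Qed.

Lemma phiK f : isNF f -> phi_inv (phi f) =1 f.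
Proof.
move=> hf s; case cs: (chainF s); last by rewrite /phi_inv cs hf.1 ?cs.
have [c [n [hc n0 ->]]] := chainF_LchP cs.
rewrite -[n]odd_double_half in n0 *; case: (odd n) (n./2) n0 => [] k n0;
  rewrite ?add1n ?add0n in n0 *; rewrite phi_inv_Lch // !coef_phi //=.
  by rewrite odd_double uphalf_double; case/orP: hc => /eqP->.
rewrite odd_double doubleK; case: k n0 => // k _.
by rewrite !opprK; case/orP: hc => /eqP->.
Qed.

Lemma phi_invK A : isLglP A -> phi (phi_inv A) = A.
Proof.
case=> h00 [h10 h11]; apply/matrixP => a b; apply/polyP => k.
rewrite coef_phi; last exact: isNF_phi_inv.
case: (ord2P a) => ->; case: (ord2P b) => ->; case: k => [|k] /=;
  by rewrite ?h00 ?h10 ?h11 // phi_inv_Lch // /= ?odd_double ?doubleK ?uphalf_double ?opprK.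
Qed.

Lemma isNF_prodF f g : isNF f -> isNF g -> isNF (prodF f g).
Proof.
move=> hf hg; split; first by move=> s hs; rewrite /prodF (negbTE hs).
exists (suppBound f + suppBound g)%N => t ht.
case ct: (chainF t); last by rewrite /prodF ct.
rewrite prodF_chain //; apply: big1_seq => p /andP[_].
rewrite mem_iota add0n => /andP[_ hp].
case: (ltnP (suppBound f) p.+1) => hfp.
  by rewrite (suppBoundP hf) ?mul0r // size_takel //; lia.
by rewrite (suppBoundP hg) ?mulr0 // size_drop; lia.
Qed.

Lemma prodF_Lch_parity f g c n K : f [::] = 0 -> g [::] = 0 -> is_color c ->
  (n < K.*2)%N -> prodF f g (Lch c n) =
    \sum_(m < K) f (Lch c (n - m.*2)) * g (Lch c m.*2)
  + \sum_(m < K) f (Lch (3 - c) (n - m.*2.+1)) * g (Lch c m.*2.+1).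
Proof.
move=> f0 g0 hc nK; rewrite (prodF_Lch (R := K.*2)) //.
rewrite (big_ord_double (fun r => f (Lch (color_below c r) (n - r)) * g (Lch c r))).
by under eq_bigr do rewrite color_below_double; under [X in _ + X]eq_bigr do
  rewrite color_below_doubleS.
Qed.

Section PhiCoefProdF.
Variables f g : seq nat -> rat.
Hypotheses (f0 : f [::] = 0) (g0 : g [::] = 0).

Lemma phiCoef_prodF00 k : phiCoef (prodF f g) 0 0 k =
  - \sum_(m < k.+1) (phiCoef g 0 0 m * phiCoef f 0 0 (k - m)
                   + phiCoef g 0 1 m * phiCoef f 1 0 (k - m)).
Proof.
rewrite phiCoef00 // (prodF_Lch_parity (K := k.+1)) // big_split.
congr (- (_ + _)); apply: eq_bigr => m _.
  have -> : (k.*2 - m.*2 = (k - m).*2)%N by lia.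
  by rewrite !phiCoef00 // mulrNN mulrC.
have -> : (k.*2 - m.*2.+1 = (k - m).*2.-1)%N by lia.
by rewrite phiCoef10 // mulrC.
Qed.

Lemma phiCoef_prodF01 k : phiCoef (prodF f g) 0 1 k =
  - \sum_(m < k.+1) (phiCoef g 0 0 m * phiCoef f 0 1 (k - m)
                   + phiCoef g 0 1 m * phiCoef f 1 1 (k - m)).
Proof.
rewrite phiCoef01 (prodF_Lch_parity (K := k.+1)) // big_split opprD -!sumrN.
congr (_ + _); apply: eq_bigr => m _; have hm : (m <= k)%N := ltn_ord m.
  have -> : (k.*2.+1 - m.*2 = (k - m).*2.+1)%N by lia.
  by rewrite phiCoef00 // mulNr opprK mulrC.
have -> : (k.*2.+1 - m.*2.+1 = (k - m).*2)%N by lia.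
by rewrite phiCoef11 // mulrN opprK mulrC.
Qed.

Lemma phiCoef_prodF10 k : phiCoef (prodF f g) 1 0 k =
  - \sum_(m < k.+1) (phiCoef g 1 0 m * phiCoef f 0 0 (k - m)
                   + phiCoef g 1 1 m * phiCoef f 1 0 (k - m)).
Proof.
case: k => [|k]; first by rewrite big_ord1 /= !mulr0 addr0 oppr0.
rewrite phiCoef10 //; change (k.+1.*2.-1) with (k.*2.+1).
rewrite (prodF_Lch_parity (K := k.+1)) //.
rewrite big_split [X in _ = - X]addrC opprD -!sumrN; congr (_ + _).
  under [in RHS]eq_bigr do rewrite phiCoef11 // phiCoef10 //.
  rewrite [in RHS]big_ord_recr /= subnn /= f0 mulr0 oppr0 addr0.
  apply: eq_bigr => m _; have hm : (m <= k)%N := ltn_ord m.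
  have -> : (k.*2.+1 - m.*2 = (k.+1 - m).*2.-1)%N by lia.
  by rewrite mulNr opprK mulrC.
under [in RHS]eq_bigr do rewrite phiCoef10 // phiCoef00 //.
rewrite [in RHS]big_ord_recl /= g0 mul0r oppr0 add0r.
apply: eq_bigr => m _; have hm : (m <= k)%N := ltn_ord m.
have -> : (k.*2.+1 - m.*2.+1 = (k - m).*2)%N by lia.
by rewrite /bump /= add1n add0n mulrN opprK mulrC.
Qed.

Lemma phiCoef_prodF11 k : phiCoef (prodF f g) 1 1 k =
  - \sum_(m < k.+1) (phiCoef g 1 0 m * phiCoef f 0 1 (k - m)
                   + phiCoef g 1 1 m * phiCoef f 1 1 (k - m)).
Proof.
rewrite phiCoef11 // (prodF_Lch_parity (K := k.+1)) // big_split.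
rewrite [X in _ = - X]addrC; congr (- (_ + _)).
  apply: eq_bigr => m _; have -> : (k.*2 - m.*2 = (k - m).*2)%N by lia.
  by rewrite !phiCoef11 // mulrNN mulrC.
rewrite [in RHS]big_ord_recl [in LHS]big_ord_recr /= mul0r add0r.
have -> : (k.*2 - k.*2.+1 = 0)%N by lia.
rewrite f0 mul0r addr0; apply: eq_bigr => m _; have hm : (m < k)%N := ltn_ord m.
have -> : (k.*2 - m.*2.+1 = (k - m.+1).*2.+1)%N by lia.
by rewrite /bump /= add1n mulrC.
Qed.

End PhiCoefProdF.

Lemma phiCoef_prodF f g (a b : 'I_2) k : f [::] = 0 -> g [::] = 0 ->
  phiCoef (prodF f g) a b k =
  - \sum_(m < k.+1) \sum_(c < 2) phiCoef g a c m * phiCoef f c b (k - m).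
Proof.
move=> f0 g0; under eq_bigr do rewrite big_ord_recl big_ord1.
case: (ord2P a) => ->; case: (ord2P b) => ->.
- exact: phiCoef_prodF00.
- exact: phiCoef_prodF01.
- exact: phiCoef_prodF10.
- exact: phiCoef_prodF11.
Qed.

Lemma phi_prodF f g : isNF f -> isNF g -> phi (prodF f g) = - (phi g * phi f).
Proof.
move=> hf hg; apply/matrixP => a b; apply/polyP => k.
rewrite -mulmxE [in RHS]mxE coefN coef_mulmx coef_phi; last exact: isNF_prodF.
rewrite phiCoef_prodF ?isNF_nil //; congr (- _).
by apply: eq_bigr => m _; apply: eq_bigr => c _; rewrite !coef_phi.
Qed.

Lemma phi_brF f g : isNF f -> isNF g -> phi (brF f g) = brL (phi f) (phi g).
Proof.
move=> hf hg.
have hbr : isNF (brF f g).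
  have [hfg [N1 b1]] := isNF_prodF hf hg; have [hgf [N2 b2]] := isNF_prodF hg hf.
  split; first by move=> s hs; rewrite /brF hfg ?hgf ?subr0.
  by exists (N1 + N2)%N => s hs; rewrite /brF b1 ?b2 ?subr0 //; lia.
apply/matrixP => a b; apply/polyP => k; rewrite coef_phi //.
have -> : phiCoef (brF f g) a b k =
    phiCoef (prodF f g) a b k - phiCoef (prodF g f) a b k.
  rewrite /brF; case: (ord2P a) => ->; case: (ord2P b) => ->; case: k => [|k] /=;
    by rewrite ?subr0 ?opprB ?opprD ?opprK // addrC.
rewrite -(coef_phi (isNF_prodF hf hg)) -(coef_phi (isNF_prodF hg hf)) !phi_prodF // /brL.
by rewrite !mxE !coefB !coefN opprK addrC.
Qed.

Theorem mainTheorem5 :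
  (forall (i j k l : nat), (i == 1%N) || (i == 2%N) -> (j == 1%N) || (j == 2%N) ->
     (0 < k)%N -> (0 < l)%N ->
     brF (deltaF (Lch i k.*2)) (deltaF (Lch j l.*2)) =1 (fun _ => 0)) /\
  (forall (i j k l : nat), (i == 1%N) || (i == 2%N) -> (j == 1%N) || (j == 2%N) ->
     (0 < k)%N ->
     brF (deltaF (Lch i k.*2)) (deltaF (Lch j l.*2.+1)) =1
       (fun s => (if i == j then -1 else 1) * deltaF (Lch j (k + l).*2.+1) s)) /\
  (forall (i j k l : nat), (i == 1%N) || (i == 2%N) -> (j == 1%N) || (j == 2%N) ->
     brF (deltaF (Lch i k.*2.+1)) (deltaF (Lch j l.*2.+1)) =1
       (fun s => deltaF (Lch j (k + l).+1.*2) s - deltaF (Lch i (k + l).+1.*2) s)) /\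
  (forall f, isNF f -> isLglP (phi f)) /\
  (forall (c : rat) f g, isNF f -> isNF g ->
     phi (fun s => c * f s + g s) = c%:P *: phi f + phi g) /\
  (forall f g, isNF f -> isNF g -> phi f = phi g -> f =1 g) /\
  (forall A, isLglP A -> exists f, isNF f /\ phi f = A) /\
  (forall f g, isNF f -> isNF g -> phi (brF f g) = brL (phi f) (phi g)).
Proof.
split; first exact: brF_Lch_even_even.
split; first exact: brF_Lch_even_odd.
split; first exact: brF_Lch_odd_odd.
split; first exact: phi_isLglP.
split; first exact: phi_lin.
split.
  by move=> f g hf hg E s; rewrite -(phiK hf) -(phiK hg) E.
split; last exact: phi_brF.
by move=> A hA; exists (phi_inv A); split; [exact: isNF_phi_inv | exact: phi_invK].
Qed.
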